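(* Let $(a,b,c,d)\in\mathbb{C}^4\setminus\{0\}$ and $f=G_{a,b,c,d}$. Then the following are equivalent: (i) $f$ is reducible; (ii) either $a^2=b^2=c^2=d^2$, or at least three of $a,b,c,d$ are zero; (iii) the point $[f]\in\mathbb{P}(V)$ lies in the $\Gamma$-orbit of $[(x_1x_2-y_1y_2)(x_3x_4-y_3y_4)]$ (note that $G_{0,0,0,1}=\frac12(x_1x_2-y_1y_2)(x_3x_4-y_3y_4)$).
   Context: Let $(\mathbb{P}^1)^4$ have bihomogeneous coordinates $((x_1:y_1),(x_2:y_2),(x_3:y_3),(x_4:y_4))$, and $V=H^0((\mathbb{P}^1)^4,\mathcal{O}(1,1,1,1))$. For $(a,b,c,d)\in\mathbb{C}^4$ put $$G_{a,b,c,d}=\tfrac{a+d}{2}(x_1x_2x_3x_4+y_1y_2y_3y_4)+\tfrac{a-d}{2}(x_1x_2y_3y_4+y_1y_2x_3x_4)+\tfrac{b+c}{2}(x_1y_2x_3y_4+y_1x_2y_3x_4)+\tfrac{b-c}{2}(x_1y_2y_3x_4+y_1x_2x_3y_4).$$ $\Gamma=\mathrm{SL}_2(\mathbb{C})^4\rtimes\mathfrak{S}_4$ acts on $V$ and $\mathbb{P}(V)$, the $i$-th factor $\mathrm{SL}_2(\mathbb{C})$ acting linearly on $(x_i,y_i)$ and $\mathfrak{S}_4$ permuting the four factors of $(\mathbb{P}^1)^4$. *)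

From HB Require Import structures.
From mathcomp Require Import all_boot all_algebra all_fingroup.
From mathcomp Require Import complex.
From mathcomp Require Import Rstruct.
From mathcomp Require Import mpoly.
Set Implicit Arguments. Unset Strict Implicit. Unset Printing Implicit Defensive.
Import GRing.Theory.
Local Open Scope ring_scope.

Definition C : closedFieldType := complex Rdefinitions.R.

(* Polynomial ring C[x1,y1,x2,y2,x3,y3,x4,y4]; variable 2i is x_{i+1},
   variable 2i+1 is y_{i+1} (i : 'I_4, so factors are numbered 0..3). *)
Definition Pol := {mpoly C[8]}.

Definition xi (i : 'I_4) : 'I_8 := inord (2 * i).
Definition yi (i : 'I_4) : 'I_8 := inord (2 * i).+1.

Definition X (i : 'I_4) : Pol := 'X_(xi i).
Definition Y (i : 'I_4) : Pol := 'X_(yi i).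

Definition i0 : 'I_4 := inord 0.
Definition i1 : 'I_4 := inord 1.
Definition i2 : 'I_4 := inord 2.
Definition i3 : 'I_4 := inord 3.

Definition G (a b c d : C) : Pol :=
    ((a + d) / 2) *: (X i0 * X i1 * X i2 * X i3 + Y i0 * Y i1 * Y i2 * Y i3)
  + ((a - d) / 2) *: (X i0 * X i1 * Y i2 * Y i3 + Y i0 * Y i1 * X i2 * X i3)
  + ((b + c) / 2) *: (X i0 * Y i1 * X i2 * Y i3 + Y i0 * X i1 * Y i2 * X i3)
  + ((b - c) / 2) *: (X i0 * Y i1 * Y i2 * X i3 + Y i0 * X i1 * X i2 * Y i3).

Definition q0 : Pol :=
  (X i0 * X i1 - Y i0 * Y i1) * (X i2 * X i3 - Y i2 * Y i3).

(* Reducibility in the polynomial ring (a UFD whose units are the nonzero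
   constants): a nonzero non-unit which is a product of two non-units. *)
Definition reducible (p : Pol) : Prop :=
  [/\ p != 0, p \isn't a GRing.unit &
      exists g h : Pol, [/\ p = g * h, g \isn't a GRing.unit & h \isn't a GRing.unit]].

(* Action of (M, s) in SL_2(C)^4 x| S_4 on polynomials, by linear substitution:
   x_i |-> M_i(0,0) x_{s i} + M_i(0,1) y_{s i},
   y_i |-> M_i(1,0) x_{s i} + M_i(1,1) y_{s i}.
   Every element of Gamma acts by such a substitution and every such
   substitution (with det M_i = 1) comes from an element of Gamma. *)
Definition subst_var (M : 'I_4 -> 'M[C]_2) (s : {perm 'I_4}) (k : 'I_8) : Pol :=
  let i : 'I_4 := inord (k./2) in
  let r : 'I_2 := inord (odd k) in
  (M i r (inord 0)) *: X (s i) + (M i r (inord 1)) *: Y (s i).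

Definition act (M : 'I_4 -> 'M[C]_2) (s : {perm 'I_4}) (p : Pol) : Pol :=
  p \mPo [tuple subst_var M s k | k < 8].

Definition in_proj_orbit (f g : Pol) : Prop :=
  exists (M : 'I_4 -> 'M[C]_2) (s : {perm 'I_4}) (lam : C),
    [/\ forall i, \det (M i) = 1, lam != 0 & f = lam *: act M s g].

From Pilot Require Import Defs.
From HB Require Import structures.
From mathcomp Require Import all_boot all_order all_algebra all_fingroup.
From mathcomp Require Import complex Rstruct mpoly.
From mathcomp Require Import ring zify.
Set Implicit Arguments.
Unset Strict Implicit.
Unset Printing Implicit Defensive.

Import Order.TTheory GRing.Theory Num.Theory.
Local Open Scope ring_scope.

(* G is multilinear, of degree one in each pair (x_i, y_i).  If G = g h with g, h
   non-units, comparing the largest and the smallest degree in (x_i, y_i) on both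
   sides shows that each pair occurs in exactly one of the factors, so the factors
   split {1,2,3,4} into two nonempty blocks.  Every coefficient of G is then the
   product of a coefficient of g and one of h, whence the exchange relations
   c(x_E y_E') c(y_E x_E') = c(x) c(y) between the coefficients of G; a case
   analysis over the partitions turns them into (ii).  Conversely, for the
   parameters in (ii), 2 G is explicitly a multiple of a translate of q0 by
   matrices among 1, diag(i, -i), [[0, 1], [-1, 0]] and the transpositions (2 3),
   (2 4); and a translate of q0 is a product of two forms vanishing at the origin,
   hence is reducible. *)

Lemma seq_argmax (T : eqType) (f : T -> int) (s : seq T) x :
  x \in s -> exists2 m, m \in s & {in s, forall y, f y <= f m}.
Proof.
elim: s x => [//|y s IH] x _; case: s IH => [|z s] IH.
  by exists y; rewrite ?mem_head // => y'; rewrite inE => /eqP->.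
have [m ms mmax] := IH z (mem_head _ _).
have [le_ym|lt_my] := leP (f y) (f m).
  exists m; first by rewrite inE ms orbT.
  by move=> y'; rewrite inE => /orP[/eqP->|/mmax].
exists y; first exact: mem_head.
by move=> y'; rewrite inE => /orP[/eqP->//|/mmax le]; rewrite (le_trans le) ?ltW.
Qed.

Section MPolyFacts.
Variables (n : nat) (R : idomainType).
Implicit Types (p q r g h : {mpoly R[n]}) (m : 'X_{1..n}).

Lemma msupp_neq0 p : p != 0 -> exists m, m \in msupp p.
Proof. by rewrite -msupp_eq0; case: msupp => [|m s] // _; exists m; rewrite mem_head. Qed.

Lemma msuppMP p q m : m \in msupp (p * q) ->
  exists m1 m2, [/\ m1 \in msupp p, m2 \in msupp q & m = (m1 + m2)%MM].
Proof. by move/msuppM_le/allpairsP => [[m1 m2] /= [? ? ->]]; exists m1, m2. Qed.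

Lemma mcoeff_sumX (s : seq 'X_{1..n}) (f : 'X_{1..n} -> R) m : uniq s ->
  (\sum_(m' <- s) f m' *: 'X_[m'] : {mpoly R[n]})@_m = if m \in s then f m else 0.
Proof.
elim: s => [|y s IH] /=; first by rewrite big_nil mcoeff0.
case/andP=> ys us; rewrite big_cons mcoeffD mcoeffZ mcoeffX IH // in_cons.
have [<-|ne] := eqVneq y m; first by rewrite (negbTE ys) mulr1 addr0.
by rewrite mulr0 add0r.
Qed.

Definition mfilter (P : pred 'X_{1..n}) p : {mpoly R[n]} :=
  \sum_(m <- msupp p) (if P m then p@_m else 0) *: 'X_[m].

Lemma mcoeff_mfilter P p m : (mfilter P p)@_m = if P m then p@_m else 0.
Proof.
rewrite mcoeff_sumX ?msupp_uniq //; case: ifP => // /negbT.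
by rewrite -mcoeff_eq0 => /eqP ->; case: (P m).
Qed.

Lemma mpoly_const_unit (F : fieldType) (p : {mpoly F[n]}) :
  p != 0 -> {in msupp p, forall m, m = 0%MM} -> p \is a GRing.unit.
Proof.
move=> p0 supp0; have pE : p = (p@_0%MM)%:MP.
  apply/mpolyP => m; rewrite mcoeffC.
  have [->|ne] := eqVneq m 0%MM; first by rewrite mulr1.
  by rewrite mulr0 memN_msupp_eq0 //; apply: contra ne => /supp0 ->.
have c0 : p@_0%MM != 0 by apply: contraNneq p0 => c0; rewrite pE c0.
apply/unitrP; exists (p@_0%MM)^-1%:MP.
by rewrite pE -!mpolyCM mcoeffC eqxx mulr1 mulVf // mulfV.
Qed.

Lemma nonunit_meval0 p : p.@[fun _ => 0] = 0 -> p \isn't a GRing.unit.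
Proof.
move=> p0; apply/negP => /unitrP [q [qp _]].
have := congr1 (meval (fun _ => 0)) qp; rewrite mevalM p0 mulr0 meval1.
by move/eqP; rewrite eq_sym oner_eq0.
Qed.

Section TopWeight.
Variable phi : 'X_{1..n} -> int.
Hypothesis phiD : forall m1 m2, phi (m1 + m2)%MM = phi m1 + phi m2.

Definition top_weight p t :=
  (exists2 m, m \in msupp p & phi m = t) /\ {in msupp p, forall m, phi m <= t}.

Lemma top_weight_exists p : p != 0 -> exists t, top_weight p t.
Proof.
case/msupp_neq0 => m0 /(@seq_argmax _ phi) [m mp mmax].
by exists (phi m); split; first by exists m.
Qed.

Lemma top_weight_const p t :
  p != 0 -> {in msupp p, forall m, phi m = t} -> top_weight p t.
Proof.
move=> /msupp_neq0 [m mp] pt; split; first by exists m; rewrite ?pt.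
by move=> m' /pt ->.
Qed.

Lemma top_weight_uniq p t t' : top_weight p t -> top_weight p t' -> t = t'.
Proof.
move=> [[m mp <-] le_t] [[m' mp' <-] le_t'].
by apply/eqP; rewrite eq_le le_t' ?le_t.
Qed.

Let weight_part t r := mfilter (fun m => phi m == t) r.

Let msupp_wpart t r m : m \in msupp (weight_part t r) -> phi m = t.
Proof. by rewrite -[_ \in _]negbK -mcoeff_eq0 mcoeff_mfilter; case: (phi m =P t) => // _; rewrite eqxx. Qed.

Let msupp_wpart_rest t r m : {in msupp r, forall m, phi m <= t} ->
  m \in msupp (r - weight_part t r) -> phi m < t.
Proof.
move=> le_t; rewrite -[_ \in _]negbK -mcoeff_eq0 mcoeffB mcoeff_mfilter.
have [_|ne] := eqVneq (phi m) t; first by rewrite subrr eqxx.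
by rewrite subr0 mcoeff_eq0 negbK => /le_t; rewrite le_eqVlt (negbTE ne).
Qed.

Let wpart_neq0 r m : m \in msupp r -> weight_part (phi m) r != 0.
Proof.
move=> mr; apply: contraTneq mr => r0.
have := mcoeff_mfilter (fun m' => phi m' == phi m) r m.
by rewrite -/(weight_part _ r) r0 mcoeff0 eqxx => /esym/eqP; rewrite mcoeff_eq0.
Qed.

Let mcoeffM_low r r' u u' m : {in msupp r, forall m, phi m <= u} ->
  {in msupp r', forall m, phi m < u'} -> phi m = u + u' -> (r * r')@_m = 0.
Proof.
move=> le_u lt_u' phim; apply: memN_msupp_eq0; apply/negP.
case/msuppMP => [m1 [m2 [/le_u le1 /lt_u' lt2 mE]]].
by move: phim; rewrite mE phiD; move: le1 lt2; lia.
Qed.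

Lemma top_weightM p q tp tq :
  top_weight p tp -> top_weight q tq -> top_weight (p * q) (tp + tq).
Proof.
move=> [[mp mpP <-] le_p] [[mq mqP <-] le_q]; split; last first.
  by move=> m /msuppMP [m1 [m2 [/le_p le1 /le_q le2 ->]]]; rewrite phiD lerD.
set pt := weight_part (phi mp) p; set qt := weight_part (phi mq) q.
have [m mtop] := msupp_neq0 (mulf_neq0 (wpart_neq0 mpP) (wpart_neq0 mqP)).
have phim : phi m = phi mp + phi mq.
  have [m1 [m2 [m1pt m2qt ->]]] := msuppMP mtop.
  by rewrite phiD (msupp_wpart m1pt) (msupp_wpart m2qt).
exists m => //; have -> : p * q = pt * qt + pt * (q - qt) + (p - pt) * q by ring.
have low1 : (pt * (q - qt))@_m = 0.
  apply: (mcoeffM_low _ (fun _ => msupp_wpart_rest le_q) phim).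
  by move=> m' /msupp_wpart ->.
have low2 : ((p - pt) * q)@_m = 0.
  by rewrite mulrC (mcoeffM_low le_q (fun _ => msupp_wpart_rest le_p)) // addrC.
by rewrite -[_ \in _]negbK -mcoeff_eq0 !mcoeffD low1 low2 !addr0 mcoeff_eq0 negbK.
Qed.

End TopWeight.

(* Factors of a polynomial that is homogeneous for an additive grading are homogeneous:
   compare the top and the bottom weights of [g * h]. *)
Lemma factor_weight_const (phi : 'X_{1..n} -> int) p g h t :
  (forall m1 m2, phi (m1 + m2)%MM = phi m1 + phi m2) ->
  p = g * h -> p != 0 -> {in msupp p, forall m, phi m = t} ->
  exists tg th, [/\ tg + th = t, {in msupp g, forall m, phi m = tg}
                                 & {in msupp h, forall m, phi m = th}].
Proof.
move=> phiD pgh p0 phit.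
have g0 : g != 0 by apply: contraNneq p0 => g0; rewrite pgh g0 mul0r.
have h0 : h != 0 by apply: contraNneq p0 => h0; rewrite pgh h0 mulr0.
pose psi m := - phi m; have psiD m1 m2 : psi (m1 + m2)%MM = psi m1 + psi m2.
  by rewrite /psi phiD opprD.
have [tg top_g] := top_weight_exists phi g0.
have [th top_h] := top_weight_exists phi h0.
have [sg bot_g] := top_weight_exists psi g0.
have [sh bot_h] := top_weight_exists psi h0.
have tgh : tg + th = t.
  apply: top_weight_uniq (top_weightM phiD top_g top_h) _.
  by rewrite -pgh; apply: top_weight_const.
have sgh : sg + sh = - t.
  apply: top_weight_uniq (top_weightM psiD bot_g bot_h) _.
  by rewrite -pgh; apply: top_weight_const => // m /phit; rewrite /psi => ->.
case: top_g top_h bot_g bot_h => [_ le_g] [_ le_h]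
  [[mg' mgP' psig] le_g'] [[mh' mhP' psih] le_h'].
have := le_g _ mgP'; have := le_h _ mhP'; rewrite /psi in psig psih le_g' le_h'.
move=> le1 le2; exists tg, th; split => // m mP.
  by have := le_g _ mP; have := le_g' _ mP; lia.
by have := le_h _ mP; have := le_h' _ mP; lia.
Qed.

Definition mnm_on (S : pred 'I_n) m := forall k, ~~ S k -> m k = 0%N.

Lemma eq_addm_on S m1 m2 A B :
  mnm_on S m1 -> mnm_on (predC S) m2 -> mnm_on S A -> mnm_on (predC S) B ->
  (m1 + m2 == A + B)%MM = (m1 == A) && (m2 == B).
Proof.
move=> on1 on2 onA onB; apply/eqP/andP => [E|[/eqP-> /eqP->]//].
have e1 : m1 = A.
  apply/mnmP => k; have := congr1 (fun m : 'X_{1..n} => m k) E; rewrite /= !mnmDE.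
  case Sk: (S k); last by rewrite on1 ?onA ?Sk.
  by rewrite on2 ?onB ?inE /= ?Sk // !addn0.
by split; apply/eqP => //; move: E; rewrite e1 => /addmI.
Qed.

Lemma mcoeffM_on S g h A B :
  {in msupp g, forall m, mnm_on S m} -> {in msupp h, forall m, mnm_on (predC S) m} ->
  mnm_on S A -> mnm_on (predC S) B -> (g * h)@_(A + B) = g@_A * h@_B.
Proof.
move=> ong onh onA onB.
have coefE r C : r@_C = \sum_(m <- msupp r) r@_m * (m == C)%:R.
  have := congr1 (mcoeff C) (mpolyE r); rewrite raddf_sum /= => {1}->.
  by apply: eq_bigr => m _; rewrite mcoeffZ mcoeffX.
rewrite mpolyME raddf_sum /= big_allpairs (coefE g) (coefE h) big_distrl /=.
apply: eq_big_seq => m mg; rewrite big_distrr /=; apply: eq_big_seq => m' mh.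
rewrite mcoeffZ mcoeffX /= (eq_addm_on (ong _ mg) (onh _ mh) onA onB).
by case: (m == A); case: (m' == B); rewrite /= ?mulr0 ?mulr1 ?mul0r.
Qed.

Lemma mcoeffM_exchange S g h A A' B B' :
  {in msupp g, forall m, mnm_on S m} -> {in msupp h, forall m, mnm_on (predC S) m} ->
  mnm_on S A -> mnm_on S A' -> mnm_on (predC S) B -> mnm_on (predC S) B' ->
  (g * h)@_(A + B') * (g * h)@_(A' + B) = (g * h)@_(A + B) * (g * h)@_(A' + B').
Proof. by move=> ong onh *; rewrite !(mcoeffM_on ong onh) // mulrACA [h@_B' * _]mulrC mulrACA. Qed.

End MPolyFacts.

Lemma xi_val i : (xi i : nat) = (2 * i)%N.
Proof. by rewrite /xi inordK //; have := ltn_ord i; lia. Qed.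

Lemma yi_val i : (yi i : nat) = (2 * i).+1%N.
Proof. by rewrite /yi inordK //; have := ltn_ord i; lia. Qed.

Lemma xi_inj : injective xi.
Proof. by move=> i j /(congr1 (@nat_of_ord 8)); rewrite !xi_val => e; apply/ord_inj; lia. Qed.

Lemma yi_inj : injective yi.
Proof. by move=> i j /(congr1 (@nat_of_ord 8)); rewrite !yi_val => e; apply/ord_inj; lia. Qed.

Lemma xi_neq_yi i j : xi i != yi j.
Proof. by rewrite -val_eqE /= xi_val yi_val; apply/eqP; lia. Qed.

Definition blk (k : 'I_8) : 'I_4 := inord k./2.

Definition blocks (E : 'I_4 -> bool) : pred 'I_8 := [pred k | E (blk k)].

Lemma var_blk k : k = xi (blk k) \/ k = yi (blk k).
Proof.
have k2 : (k./2 < 4)%N by rewrite ltn_half_double.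
have := odd_double_half k; rewrite -mul2n.
case: (boolP (odd k)) => ok; [right|left]; apply/val_inj;
  by rewrite /= ?xi_val ?yi_val /blk inordK // ?ok; lia.
Qed.

Lemma blk_xi i : blk (xi i) = i.
Proof. by apply/val_inj; rewrite /blk xi_val mul2n doubleK inord_val. Qed.

Lemma blk_yi i : blk (yi i) = i.
Proof. by apply/val_inj; rewrite /blk yi_val mul2n /= uphalf_double inord_val. Qed.

Lemma i0_val : (i0 : nat) = 0%N. Proof. by rewrite /i0 inordK. Qed.
Lemma i1_val : (i1 : nat) = 1%N. Proof. by rewrite /i1 inordK. Qed.
Lemma i2_val : (i2 : nat) = 2%N. Proof. by rewrite /i2 inordK. Qed.
Lemma i3_val : (i3 : nat) = 3%N. Proof. by rewrite /i3 inordK. Qed.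

Lemma ord4P (i : 'I_4) : [\/ i = i0, i = i1, i = i2 | i = i3].
Proof.
case: i => [[|[|[|[|k]]]] lt_i4] //; [constructor 1|constructor 2|constructor 3|constructor 4];
  by apply/val_inj; rewrite /= ?i0_val ?i1_val ?i2_val ?i3_val.
Qed.

Lemma big_ord4 (T : Type) (idx : T) (op : Monoid.law idx) (F : 'I_4 -> T) :
  \big[op/idx]_(i < 4) F i = op (op (op (F i0) (F i1)) (F i2)) (F i3).
Proof.
rewrite !big_ord_recr big_ord0 Monoid.mul1m.
by congr (op (op (op (F _) (F _)) (F _)) (F _)); apply/val_inj;
  rewrite /= ?i0_val ?i1_val ?i2_val ?i3_val.
Qed.

Definition var_of (i : 'I_4) (b : bool) : 'I_8 := if b then xi i else yi i.

Definition mmon_on (E c : 'I_4 -> bool) : 'X_{1..8} :=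
  (\sum_(i < 4 | E i) U_(var_of i (c i)))%MM.

Definition mmon (c : 'I_4 -> bool) := mmon_on (fun _ => true) c.

Lemma eq_var_of i j b b' : (var_of i b == var_of j b') = (i == j) && (b == b').
Proof.
case: b; case: b'; rewrite /var_of ?(inj_eq xi_inj) ?(inj_eq yi_inj) ?andbT ?andbF //.
  exact/negbTE/xi_neq_yi.
by rewrite eq_sym; apply/negbTE/xi_neq_yi.
Qed.

Lemma mmon_on_var E c i b : mmon_on E c (var_of i b) = (E i && (c i == b)) :> nat.
Proof.
rewrite /mmon_on mnm_sumE big_mkcond (bigD1 i) //= big1 ?addn0.
  by rewrite mnm1E eq_var_of eqxx; case: (E i).
by move=> j /negbTE ne; rewrite mnm1E eq_var_of ne; case: (E j).
Qed.

Lemma mmon_on_xi E c i : mmon_on E c (xi i) = (E i && c i) :> nat.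
Proof. by rewrite -[xi i]/(var_of i true) mmon_on_var eqb_id. Qed.

Lemma mmon_on_yi E c i : mmon_on E c (yi i) = (E i && ~~ c i) :> nat.
Proof. by rewrite -[yi i]/(var_of i false) mmon_on_var eqbF_neg. Qed.

Lemma mnm_on_mmon_on E c : mnm_on (blocks E) (mmon_on E c).
Proof.
move=> k; rewrite /blocks inE /=; case: (var_blk k) => ->;
  by rewrite ?blk_xi ?blk_yi ?mmon_on_xi ?mmon_on_yi => /negbTE ->.
Qed.

Definition mix (E c c' : 'I_4 -> bool) i := if E i then c i else c' i.

Lemma mmon_mix E c c' :
  mmon (mix E c c') = (mmon_on E c + mmon_on (fun i => ~~ E i) c')%MM.
Proof.
rewrite /mmon /mmon_on (bigID E) /=; congr (_ + _)%MM; apply: eq_bigr => i Ei.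
  by rewrite /mix Ei.
by rewrite /mix (negbTE Ei).
Qed.

Lemma mmon_split E c :
  mmon c = (mmon_on E c + mmon_on (fun i => ~~ E i) c)%MM.
Proof. exact: bigID. Qed.

Definition pair_deg (i : 'I_4) (m : 'X_{1..8}) : nat := (m (xi i) + m (yi i))%N.

Lemma pair_deg_mmon c i : pair_deg i (mmon c) = 1%N.
Proof. by rewrite /pair_deg mmon_on_xi mmon_on_yi; case: (c i). Qed.

Definition bool4 (b0 b1 b2 b3 : bool) (i : 'I_4) : bool := nth false [:: b0; b1; b2; b3] i.

Lemma bool4_0 b0 b1 b2 b3 : bool4 b0 b1 b2 b3 i0 = b0. Proof. by rewrite /bool4 i0_val. Qed.
Lemma bool4_1 b0 b1 b2 b3 : bool4 b0 b1 b2 b3 i1 = b1. Proof. by rewrite /bool4 i1_val. Qed.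
Lemma bool4_2 b0 b1 b2 b3 : bool4 b0 b1 b2 b3 i2 = b2. Proof. by rewrite /bool4 i2_val. Qed.
Lemma bool4_3 b0 b1 b2 b3 : bool4 b0 b1 b2 b3 i3 = b3. Proof. by rewrite /bool4 i3_val. Qed.
Definition bool4E := (bool4_0, bool4_1, bool4_2, bool4_3).

Definition mmon4 b0 b1 b2 b3 := mmon (bool4 b0 b1 b2 b3).

Lemma mmon_bool4 x : mmon x = mmon4 (x i0) (x i1) (x i2) (x i3).
Proof.
by apply: eq_bigr => i _; case: (ord4P i) => ->; rewrite bool4E.
Qed.

Lemma mpolyX_mmon4 b0 b1 b2 b3 : 'X_[mmon4 b0 b1 b2 b3] =
  (if b0 then X i0 else Y i0) * (if b1 then X i1 else Y i1) *
  (if b2 then X i2 else Y i2) * (if b3 then X i3 else Y i3).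
Proof.
rewrite /mmon4 /mmon /mmon_on -mprodXE big_ord4 !bool4E.
by rewrite /var_of /X /Y; case: b0; case: b1; case: b2; case: b3.
Qed.

Lemma eq_mmon4 b0 b1 b2 b3 c0 c1 c2 c3 :
  (mmon4 b0 b1 b2 b3 == mmon4 c0 c1 c2 c3) = [&& b0 == c0, b1 == c1, b2 == c2 & b3 == c3].
Proof.
apply/eqP/idP => [E|/and4P[/eqP-> /eqP-> /eqP-> /eqP->] //].
have ex i : bool4 b0 b1 b2 b3 i = bool4 c0 c1 c2 c3 i.
  by have := congr1 (fun m : 'X_{1..8} => m (xi i)) E; rewrite /= !mmon_on_xi; do 2!case: bool4.
move: (ex i0) (ex i1) (ex i2) (ex i3).
by rewrite !bool4E => -> -> -> ->; rewrite !eqxx.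
Qed.

Lemma G_mmon4 a b c d : G a b c d =
    ((a + d) / 2) *: ('X_[mmon4 true true true true] + 'X_[mmon4 false false false false])
  + ((a - d) / 2) *: ('X_[mmon4 true true false false] + 'X_[mmon4 false false true true])
  + ((b + c) / 2) *: ('X_[mmon4 true false true false] + 'X_[mmon4 false true false true])
  + ((b - c) / 2) *: ('X_[mmon4 true false false true] + 'X_[mmon4 false true true false]).
Proof. by rewrite !mpolyX_mmon4. Qed.

Definition coefG (a b c d : C) (x : 'I_4 -> bool) : C :=
  if (x i0 == x i1) && (x i2 == x i3) then
    (if x i0 == x i2 then (a + d) / 2 else (a - d) / 2)
  else if (x i0 != x i1) && (x i2 != x i3) then
    (if x i0 == x i2 then (b + c) / 2 else (b - c) / 2)
  else 0.

Lemma mcoeffG a b c d x : (G a b c d)@_(mmon x) = coefG a b c d x.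
Proof.
rewrite mmon_bool4 G_mmon4 !(mcoeffD, mcoeffZ, mcoeffX) !eq_mmon4 /coefG.
by case: (x i0); case: (x i1); case: (x i2); case: (x i3) => /=; ring.
Qed.

Lemma msuppG a b c d m : m \in msupp (G a b c d) -> exists x, m = mmon x.
Proof.
rewrite -[_ \in _]negbK -mcoeff_eq0 G_mmon4 !(mcoeffD, mcoeffZ, mcoeffX).
do 8 (case: (eqVneq (mmon4 _ _ _ _) m) => [<-|_]; first by eexists).
by rewrite /= !mulr0n !addr0 !mulr0 !addr0 eqxx.
Qed.

Lemma pair_degG a b c d i : {in msupp (G a b c d), forall m, pair_deg i m = 1%N}.
Proof. by move=> m /msuppG [x ->]; apply: pair_deg_mmon. Qed.

Lemma factor_pair_deg a b c d g h i : G a b c d = g * h -> G a b c d != 0 ->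
  exists e : bool, {in msupp g, forall m, pair_deg i m = e} /\
                   {in msupp h, forall m, pair_deg i m = ~~ e}.
Proof.
move=> Ggh G0; pose w m : int := (pair_deg i m)%:Z.
have wD m1 m2 : w (m1 + m2)%MM = w m1 + w m2 by rewrite /w /pair_deg !mnmDE; lia.
have wG : {in msupp (G a b c d), forall m, w m = 1} by move=> m mG; rewrite /w (pair_degG i mG).
have [tg [th [tgh wg wh]]] := factor_weight_const wD Ggh G0 wG.
have g0 : g != 0 by apply: contraNneq G0 => g0; rewrite Ggh g0 mul0r.
have h0 : h != 0 by apply: contraNneq G0 => h0; rewrite Ggh h0 mulr0.
have [[mg mgP] [mh mhP]] := (msupp_neq0 g0, msupp_neq0 h0).
have := wg _ mgP; have := wh _ mhP; rewrite /w => tgE thE.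
exists (tg == 1); split => m mP; [have := wg _ mP | have := wh _ mP];
  by rewrite /w; case: eqP => /=; lia.
Qed.

Lemma mnm_on_blocks E m :
  (forall i, ~~ E i -> pair_deg i m = 0%N) -> mnm_on (blocks E) m.
Proof.
move=> deg0 k /deg0; rewrite /pair_deg.
by case: (var_blk k) => kE; rewrite -kE; lia.
Qed.

Lemma pair_deg0_unit (r : Pol) :
  r != 0 -> {in msupp r, forall m i, pair_deg i m = 0%N} -> r \is a GRing.unit.
Proof.
move=> r0 deg0; apply: mpoly_const_unit r0 _ => m mP; apply/mnmP => k.
have := deg0 m mP (blk k); rewrite mnm0E /pair_deg.
by case: (var_blk k) => kE; rewrite -kE; lia.
Qed.

Lemma reducible_G_split a b c d : reducible (G a b c d) ->
  exists (g h : Pol) (E : 'I_4 -> bool),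
    [/\ G a b c d = g * h, {in msupp g, forall m, mnm_on (blocks E) m},
        {in msupp h, forall m, mnm_on (predC (blocks E)) m},
        [exists i, E i] & [exists i, ~~ E i]].
Proof.
move=> [G0 _ [g [h [Ggh gnu hnu]]]].
have g0 : g != 0 by apply: contraNneq G0 => g0; rewrite Ggh g0 mul0r.
have h0 : h != 0 by apply: contraNneq G0 => h0; rewrite Ggh h0 mulr0.
have [mg mgP] := msupp_neq0 g0; pose E i := pair_deg i mg == 1%N.
have degE i : {in msupp g, forall m, pair_deg i m = E i} /\
              {in msupp h, forall m, pair_deg i m = ~~ E i}.
  have [e [eg eh]] := factor_pair_deg i Ggh G0.
  by rewrite /E (eg _ mgP); case: e eg eh.
exists g, h, E; split => //.
- move=> m mP; apply: mnm_on_blocks => i /negbTE nE.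
  by rewrite (degE i).1 // nE.
- move=> m mP; apply: (@mnm_on_blocks (fun i => ~~ E i)) => i /negbNE Ei.
  by rewrite (degE i).2 // Ei.
- have [//|/existsPn noE] := boolP [exists i, E i].
  case/negP: gnu; apply: pair_deg0_unit g0 _ => m mP i.
  by rewrite (degE i).1 // (negbTE (noE i)).
- have [//|/existsPn allE] := boolP [exists i, ~~ E i].
  case/negP: hnu; apply: pair_deg0_unit h0 _ => m mP i.
  by rewrite (degE i).2 // (negbNE (allE i)).
Qed.

(* The 2 x 2 minors of the coefficient tensor of G, flattened along the
   partition E | ~E of the factors, vanish. *)
Lemma coefG_exchange a b c d : reducible (G a b c d) ->
  exists E : 'I_4 -> bool, [/\ [exists i, E i], [exists i, ~~ E i] &
    forall x y, coefG a b c d (mix E x y) * coefG a b c d (mix E y x)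
                = coefG a b c d x * coefG a b c d y].
Proof.
case/reducible_G_split => g [h [E [Ggh ong onh EP nEP]]]; exists E; split => // x y.
rewrite -!mcoeffG !mmon_mix !(mmon_split E) Ggh.
by apply: (mcoeffM_exchange ong onh); apply: mnm_on_mmon_on.
Qed.

Definition sq_eq_or_three0 (a b c d : C) : Prop :=
  (a ^+ 2 = b ^+ 2 /\ b ^+ 2 = c ^+ 2 /\ c ^+ 2 = d ^+ 2) \/
  [\/ [/\ a = 0, b = 0 & c = 0], [/\ a = 0, b = 0 & d = 0],
      [/\ a = 0, c = 0 & d = 0] | [/\ b = 0, c = 0 & d = 0]].

(* Proves [e = 0] when [e] is, up to ring normalisation, [L - R] or [R - L]
   for some hypothesis [L = R]. *)
Ltac ring_zero := first [ ring | match goal with h : ?L = ?R |- _ = 0 =>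
  first [ apply: (@etrans _ _ (L - R)); [ring | by rewrite h subrr]
        | apply: (@etrans _ _ (R - L)); [ring | by rewrite h subrr] ] end ].
Ltac ring_eq := apply/eqP; rewrite -subr_eq0; apply/eqP; ring_zero.

Lemma sqr0 (x : C) : x * x = 0 -> x = 0.
Proof. by move/eqP; rewrite mulf_eq0 orbb => /eqP. Qed.

Lemma sqr_eq_cases (x y : C) : x * x - y * y = 0 -> x - y = 0 \/ x + y = 0.
Proof.
move=> h; have : (x - y) * (x + y) = 0 by rewrite -h; ring.
by move/eqP; rewrite mulf_eq0 => /orP[/eqP|/eqP]; [left|right].
Qed.

Lemma mulf_eq0_l (x y : C) : x != 0 -> x * y = 0 -> y = 0.
Proof. by move=> x0 /eqP; rewrite mulf_eq0 (negbTE x0) => /eqP. Qed.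

(* Below, [a = p + q], [d = p - q], [b = r + s] and [c = r - s], so that
   [p, q, r, s] are the four coefficients of G. *)
Lemma sq_eq_or_three0_split01 (p q r s : C) : p * p - q * q = 0 -> r * r - s * s = 0 ->
  p * r = 0 -> p * s = 0 -> q * r = 0 -> q * s = 0 ->
  sq_eq_or_three0 (p + q) (r + s) (r - s) (p - q).
Proof.
move=> pq rs pr ps qr qs; right; have [p0|p0] := eqVneq p 0.
  subst p; have q0 : q = 0 by apply: sqr0; ring_zero.
  subst q; have [e|e] := sqr_eq_cases rs.
    by constructor 3; split; rewrite ?e //; ring.
  by constructor 2; split; rewrite ?e //; ring.
rewrite (mulf_eq0_l p0 pr) (mulf_eq0_l p0 ps); have [e|e] := sqr_eq_cases pq.
  by constructor 4; split; rewrite ?e //; ring.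
by constructor 1; split; rewrite ?e //; ring.
Qed.

Lemma sq_eq_or_three0_split02 (p q r s : C) : p * p - r * r = 0 -> q * q - s * s = 0 ->
  p * q = 0 -> p * s = 0 -> q * r = 0 -> r * s = 0 ->
  sq_eq_or_three0 (p + q) (r + s) (r - s) (p - q).
Proof.
move=> pr qs pq ps qr rs; left; have [p0|p0] := eqVneq p 0.
  subst p; have r0 : r = 0 by apply: sqr0; ring_zero.
  by subst r; split; [|split]; ring_eq.
rewrite (mulf_eq0_l p0 pq) (mulf_eq0_l p0 ps).
by split; [|split]; ring_eq.
Qed.

Lemma sq_eq_or_three0_split03 (p q r s : C) : p * p - s * s = 0 -> q * q - r * r = 0 ->
  p * q = 0 -> p * r = 0 -> s * q = 0 -> s * r = 0 ->
  sq_eq_or_three0 (p + q) (r + s) (r - s) (p - q).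
Proof.
move=> ps qr pq pr sq sr; left; have [p0|p0] := eqVneq p 0.
  subst p; have s0 : s = 0 by apply: sqr0; ring_zero.
  by subst s; split; [|split]; ring_eq.
rewrite (mulf_eq0_l p0 pq) (mulf_eq0_l p0 pr).
by split; [|split]; ring_eq.
Qed.

Lemma halvesE (a d : C) : (a + d) / 2 + (a - d) / 2 = a /\ (a + d) / 2 - (a - d) / 2 = d.
Proof. by split; field. Qed.

Lemma sq_eq_or_three0_halves (a b c d : C) :
  sq_eq_or_three0 ((a + d) / 2 + (a - d) / 2) ((b + c) / 2 + (b - c) / 2)
                  ((b + c) / 2 - (b - c) / 2) ((a + d) / 2 - (a - d) / 2) ->
  sq_eq_or_three0 a b c d.
Proof. by have [-> ->] := halvesE a d; have [-> ->] := halvesE b c. Qed.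

Lemma halves_eq0 (a b c d : C) :
  (a + d) / 2 * ((a + d) / 2) = 0 -> (a - d) / 2 * ((a - d) / 2) = 0 ->
  (b + c) / 2 * ((b + c) / 2) = 0 -> (b - c) / 2 * ((b - c) / 2) = 0 ->
  [/\ a = 0, b = 0, c = 0 & d = 0].
Proof.
move=> /sqr0 ad /sqr0 ad' /sqr0 bc /sqr0 bc'.
have [ea ed] := halvesE a d; have [eb ec] := halvesE b c.
split; [rewrite -ea | rewrite -eb | rewrite -ec | rewrite -ed];
  by rewrite ?ad ?ad' ?bc ?bc' ?subrr ?addr0.
Qed.

Lemma coefG_exchange_cond a b c d (E : 'I_4 -> bool) :
  ~ (a = 0 /\ b = 0 /\ c = 0 /\ d = 0) -> [exists i, E i] -> [exists i, ~~ E i] ->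
  (forall x y, coefG a b c d (mix E x y) * coefG a b c d (mix E y x)
               = coefG a b c d x * coefG a b c d y) ->
  sq_eq_or_three0 a b c d.
Proof.
move=> nz EP nEP K.
have {}nz : ~ [/\ a = 0, b = 0, c = 0 & d = 0] by case=> *; apply: nz.
have {EP}EP : [|| E i0, E i1, E i2 | E i3].
  by case/existsP: EP => i; case: (ord4P i) => <- ->; rewrite ?orbT.
have {nEP}nEP : [|| ~~ E i0, ~~ E i1, ~~ E i2 | ~~ E i3].
  by case/existsP: nEP => i; case: (ord4P i) => <- ->; rewrite ?orbT.
have K4 b0 b1 b2 b3 c0 c1 c2 c3 := K (bool4 b0 b1 b2 b3) (bool4 c0 c1 c2 c3).
move: (K4 true true true true false false false false)
      (K4 true true false false false false true true)
      (K4 true false true false false true false true)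
      (K4 true false false true false true true false)
      (K4 true true true true true true false false)
      (K4 true true true true true false true false)
      (K4 true true true true true false false true)
      (K4 true true false false true false true false)
      (K4 true true false false true false false true)
      (K4 true false true false true false false true).
rewrite /coefG /mix !bool4E; move: EP nEP.
case: (E i0); case: (E i1); case: (E i2); case: (E i3) => //= _ _ h1 h2 h3 h4 h5 h6 h7 h8 h9 h10.
- by case: nz; apply: halves_eq0; ring_zero.
- by case: nz; apply: halves_eq0; ring_zero.
- by apply: sq_eq_or_three0_halves; apply: sq_eq_or_three0_split01; ring_zero.
- by case: nz; apply: halves_eq0; ring_zero.
- by apply: sq_eq_or_three0_halves; apply: sq_eq_or_three0_split02; ring_zero.
- by apply: sq_eq_or_three0_halves; apply: sq_eq_or_three0_split03; ring_zero.
- by case: nz; apply: halves_eq0; ring_zero.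
- by case: nz; apply: halves_eq0; ring_zero.
- by apply: sq_eq_or_three0_halves; apply: sq_eq_or_three0_split03; ring_zero.
- by apply: sq_eq_or_three0_halves; apply: sq_eq_or_three0_split02; ring_zero.
- by case: nz; apply: halves_eq0; ring_zero.
- by apply: sq_eq_or_three0_halves; apply: sq_eq_or_three0_split01; ring_zero.
- by case: nz; apply: halves_eq0; ring_zero.
- by case: nz; apply: halves_eq0; ring_zero.
Qed.

Lemma act_mul M s p q : Defs.act M s (p * q) = Defs.act M s p * Defs.act M s q.
Proof. exact: rmorphM. Qed.

Lemma act_sub M s p q : Defs.act M s (p - q) = Defs.act M s p - Defs.act M s q.
Proof. exact: rmorphB. Qed.

Lemma act_X M s i : Defs.act M s (X i) =
  M i (inord 0) (inord 0) *: X (s i) + M i (inord 0) (inord 1) *: Y (s i).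
Proof.
rewrite /Defs.act /X comp_mpolyXU -(tnth_nth 0) tnth_mktuple /subst_var.
by rewrite xi_val mul2n doubleK odd_double inord_val.
Qed.

Lemma act_Y M s i : Defs.act M s (Y i) =
  M i (inord 1) (inord 0) *: X (s i) + M i (inord 1) (inord 1) *: Y (s i).
Proof.
rewrite /Defs.act /Y comp_mpolyXU -(tnth_nth 0) tnth_mktuple /subst_var.
by rewrite yi_val mul2n /= uphalf_double odd_double inord_val.
Qed.

Lemma meval0_act M s p : (Defs.act M s p).@[fun _ => 0] = p.@[fun _ => 0].
Proof.
rewrite /Defs.act comp_mpoly_meval; apply: meval_eq => k.
by rewrite tnth_mktuple /subst_var !(mevalD, mevalZ) /X /Y !mevalXU !mulr0 addr0.
Qed.

Lemma meval0_XY_form i j k l :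
  (X i * X j - Y k * Y l).@[fun _ => 0] = 0.
Proof. by rewrite mevalB !mevalM /X /Y !mevalXU mulr0 subrr. Qed.

(* Both factors vanish at the origin, hence are not units. *)
Lemma reducible_act_q0 M s lam :
  lam *: Defs.act M s q0 != 0 -> reducible (lam *: Defs.act M s q0).
Proof.
move=> nz; have f0 (u v : 'I_4) :
    (Defs.act M s (X u * X v - Y u * Y v)).@[fun _ => 0] = 0.
  by rewrite meval0_act meval0_XY_form.
split; first exact: nz.
  by apply: nonunit_meval0; rewrite mevalZ meval0_act mevalM meval0_XY_form mul0r mulr0.
exists (lam *: Defs.act M s (X i0 * X i1 - Y i0 * Y i1)), (Defs.act M s (X i2 * X i3 - Y i2 * Y i3)).
split; last exact/nonunit_meval0/f0.
  by rewrite /q0 act_mul scalerAl.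
by apply: nonunit_meval0; rewrite mevalZ f0 mulr0.
Qed.

Definition mx2 (e00 e01 e10 e11 : C) : 'M[C]_2 :=
  \matrix_(r < 2, c < 2)
    if r == 0 :> nat then (if c == 0 :> nat then e00 else e01)
    else (if c == 0 :> nat then e10 else e11).

Lemma det_mx2 e00 e01 e10 e11 : \det (mx2 e00 e01 e10 e11) = e00 * e11 - e01 * e10.
Proof.
rewrite (expand_det_row _ 0) !big_ord_recr big_ord0 /= /cofactor.
by rewrite !det_mx11 !mxE /= expr0 expr1 mul1r mulN1r add0r mulrN.
Qed.

Lemma mx2E00 e00 e01 e10 e11 : mx2 e00 e01 e10 e11 (inord 0) (inord 0) = e00.
Proof. by rewrite mxE !inordK. Qed.
Lemma mx2E01 e00 e01 e10 e11 : mx2 e00 e01 e10 e11 (inord 0) (inord 1) = e01.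
Proof. by rewrite mxE !inordK. Qed.
Lemma mx2E10 e00 e01 e10 e11 : mx2 e00 e01 e10 e11 (inord 1) (inord 0) = e10.
Proof. by rewrite mxE !inordK. Qed.
Lemma mx2E11 e00 e01 e10 e11 : mx2 e00 e01 e10 e11 (inord 1) (inord 1) = e11.
Proof. by rewrite mxE !inordK. Qed.
Definition mx2E := (mx2E00, mx2E01, mx2E10, mx2E11).

Definition mxI := mx2 1 0 0 1.
Definition mxJ := mx2 'i 0 0 (- 'i).
Definition mxW := mx2 0 1 (-1) 0.

Lemma det_mxI : \det mxI = 1. Proof. by rewrite det_mx2; ring. Qed.
Lemma det_mxJ : \det mxJ = 1. Proof. by rewrite det_mx2 mulrN mulCii; ring. Qed.
Lemma det_mxW : \det mxW = 1. Proof. by rewrite det_mx2; ring. Qed.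

Definition mxs (m n : 'M[C]_2) (i : 'I_4) : 'M[C]_2 := if odd i then n else m.

Lemma mxsE m n : [/\ mxs m n i0 = m, mxs m n i1 = n, mxs m n i2 = m & mxs m n i3 = n].
Proof. by rewrite /mxs i0_val i1_val i2_val i3_val. Qed.

Lemma det_mxs m n : \det m = 1 -> \det n = 1 -> forall i, \det (mxs m n i) = 1.
Proof. by move=> dm dn i; rewrite /mxs; case: odd. Qed.

(* The image of x_p x_q - y_p y_q when (x_p, y_p) is transformed by m and (x_q, y_q) by n. *)
Definition sl2_form (m n : 'M[C]_2) (p q : 'I_4) : Pol :=
  (m (inord 0) (inord 0) *: X p + m (inord 0) (inord 1) *: Y p) *
  (n (inord 0) (inord 0) *: X q + n (inord 0) (inord 1) *: Y q) -
  (m (inord 1) (inord 0) *: X p + m (inord 1) (inord 1) *: Y p) *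
  (n (inord 1) (inord 0) *: X q + n (inord 1) (inord 1) *: Y q).

Lemma act_mxs_q0 m n s :
  Defs.act (mxs m n) s q0 = sl2_form m n (s i0) (s i1) * sl2_form m n (s i2) (s i3).
Proof.
have [m0 n1 m2 n3] := mxsE m n.
by rewrite /q0 !(act_mul, act_sub) !act_X !act_Y m0 n1 m2 n3.
Qed.

Lemma sl2_form_II p q : sl2_form mxI mxI p q = X p * X q - Y p * Y q.
Proof. by rewrite /sl2_form !mx2E !scale1r !scale0r !addr0 !add0r. Qed.

Lemma sl2_form_JI p q : sl2_form mxJ mxI p q = 'i *: (X p * X q + Y p * Y q).
Proof. by rewrite /sl2_form !mx2E !scale1r !scale0r !addr0 !add0r -!mul_mpolyC; ring. Qed.

Lemma sl2_form_IW p q : sl2_form mxI mxW p q = X p * Y q + Y p * X q.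
Proof. by rewrite /sl2_form !mx2E !scale1r !scale0r !addr0 !add0r -!mul_mpolyC; ring. Qed.

Lemma sl2_form_JW p q : sl2_form mxJ mxW p q = 'i *: (X p * Y q - Y p * X q).
Proof. by rewrite /sl2_form !mx2E !scale1r !scale0r !addr0 !add0r -!mul_mpolyC; ring. Qed.

Definition sl2_formE := (sl2_form_II, sl2_form_JI, sl2_form_IW, sl2_form_JW).

Lemma scale_iM (P Q : Pol) : ('i *: P) * ('i *: Q) = - (P * Q).
Proof. by rewrite -scalerAl -scalerAr scalerA mulCii scaleN1r. Qed.

Lemma scale2G a b c d : (2 : C) *: G a b c d =
    (a + d) *: (X i0 * X i1 * X i2 * X i3 + Y i0 * Y i1 * Y i2 * Y i3)
  + (a - d) *: (X i0 * X i1 * Y i2 * Y i3 + Y i0 * Y i1 * X i2 * X i3)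
  + (b + c) *: (X i0 * Y i1 * X i2 * Y i3 + Y i0 * X i1 * Y i2 * X i3)
  + (b - c) *: (X i0 * Y i1 * Y i2 * X i3 + Y i0 * X i1 * X i2 * Y i3).
Proof.
have two_half (x : C) : 2 * (x / 2) = x by field.
(* [G] is generalised first: rewriting inside its monomials is very slow. *)
suff scale2 (s1 s2 s3 s4 : C) (P1 P2 P3 P4 : Pol) :
    (2 : C) *: ((s1 / 2) *: P1 + (s2 / 2) *: P2 + (s3 / 2) *: P3 + (s4 / 2) *: P4)
    = s1 *: P1 + s2 *: P2 + s3 *: P3 + s4 *: P4 by apply: scale2.
by rewrite !scalerDr !scalerA !two_half.
Qed.

Lemma neq_i01 : i0 != i1. Proof. by rewrite -val_eqE /= i0_val i1_val. Qed.
Lemma neq_i02 : i0 != i2. Proof. by rewrite -val_eqE /= i0_val i2_val. Qed.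
Lemma neq_i03 : i0 != i3. Proof. by rewrite -val_eqE /= i0_val i3_val. Qed.
Lemma neq_i13 : i1 != i3. Proof. by rewrite -val_eqE /= i1_val i3_val. Qed.
Lemma neq_i23 : i2 != i3. Proof. by rewrite -val_eqE /= i2_val i3_val. Qed.
Lemma neq_i12 : i1 != i2. Proof. by rewrite -val_eqE /= i1_val i2_val. Qed.

Definition neq_ord4 := (neq_i01, neq_i02, neq_i03, neq_i12, neq_i13, neq_i23).

Lemma tpermE12 : [/\ tperm i1 i2 i0 = i0, tperm i1 i2 i1 = i2,
                    tperm i1 i2 i2 = i1 & tperm i1 i2 i3 = i3].
Proof.
by split; rewrite ?tpermL ?tpermR // tpermD ?neq_ord4 // eq_sym ?neq_ord4.
Qed.

Lemma tpermE13 : [/\ tperm i1 i3 i0 = i0, tperm i1 i3 i1 = i3,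
                    tperm i1 i3 i2 = i2 & tperm i1 i3 i3 = i1].
Proof.
by split; rewrite ?tpermL ?tpermR // tpermD ?neq_ord4 // eq_sym ?neq_ord4.
Qed.

Ltac witness := rewrite !sl2_formE ?scale_iM -?scaleNr -!mul_mpolyC; ring.

Lemma twoG_000d d : (2 : C) *: G 0 0 0 d = d *: Defs.act (mxs mxI mxI) 1 q0.
Proof. by rewrite scale2G act_mxs_q0 !perm1; witness. Qed.

Lemma twoG_a000 a : (2 : C) *: G a 0 0 0 = - a *: Defs.act (mxs mxJ mxI) 1 q0.
Proof. by rewrite scale2G act_mxs_q0 !perm1; witness. Qed.

Lemma twoG_0b00 b : (2 : C) *: G 0 b 0 0 = b *: Defs.act (mxs mxI mxW) 1 q0.
Proof. by rewrite scale2G act_mxs_q0 !perm1; witness. Qed.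

Lemma twoG_00c0 c : (2 : C) *: G 0 0 c 0 = - c *: Defs.act (mxs mxJ mxW) 1 q0.
Proof. by rewrite scale2G act_mxs_q0 !perm1; witness. Qed.

Section SquaresEqual.
Variable a : C.
Let s12 := tperm i1 i2.
Let s13 := tperm i1 i3.

Lemma twoG_aaaa : (2 : C) *: G a a a a = - (a + a) *: Defs.act (mxs mxJ mxI) s12 q0.
Proof. by rewrite scale2G act_mxs_q0; have [-> -> -> ->] := tpermE12; witness. Qed.

Lemma twoG_anna : (2 : C) *: G a (- a) (- a) a = (a + a) *: Defs.act (mxs mxI mxI) s12 q0.
Proof. by rewrite scale2G act_mxs_q0; have [-> -> -> ->] := tpermE12; witness. Qed.

Lemma twoG_aann : (2 : C) *: G a a (- a) (- a) = (a + a) *: Defs.act (mxs mxI mxW) s12 q0.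
Proof. by rewrite scale2G act_mxs_q0; have [-> -> -> ->] := tpermE12; witness. Qed.

Lemma twoG_anan : (2 : C) *: G a (- a) a (- a) = - (a + a) *: Defs.act (mxs mxJ mxW) s12 q0.
Proof. by rewrite scale2G act_mxs_q0; have [-> -> -> ->] := tpermE12; witness. Qed.

Lemma twoG_aana : (2 : C) *: G a a (- a) a = - (a + a) *: Defs.act (mxs mxJ mxI) s13 q0.
Proof. by rewrite scale2G act_mxs_q0; have [-> -> -> ->] := tpermE13; witness. Qed.

Lemma twoG_anaa : (2 : C) *: G a (- a) a a = (a + a) *: Defs.act (mxs mxI mxI) s13 q0.
Proof. by rewrite scale2G act_mxs_q0; have [-> -> -> ->] := tpermE13; witness. Qed.

Lemma twoG_aaan : (2 : C) *: G a a a (- a) = (a + a) *: Defs.act (mxs mxI mxW) s13 q0.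
Proof. by rewrite scale2G act_mxs_q0; have [-> -> -> ->] := tpermE13; witness. Qed.

Lemma twoG_annn : (2 : C) *: G a (- a) (- a) (- a) = (a + a) *: Defs.act (mxs mxJ mxW) s13 q0.
Proof. by rewrite scale2G act_mxs_q0; have [-> -> -> ->] := tpermE13; witness. Qed.

End SquaresEqual.

Lemma in_proj_orbit_scale2G a b c d M s lam :
  (forall i, \det (M i) = 1) -> lam != 0 ->
  (2 : C) *: G a b c d = lam *: Defs.act M s q0 -> in_proj_orbit (G a b c d) q0.
Proof.
have two0 : (2 : C) != 0 by rewrite pnatr_eq0.
move=> detM lam0 GE; exists M, s, (lam / 2); split => //.
  by rewrite mulf_neq0 // invr_eq0.
have two_half : 2 * (lam / 2) = lam by rewrite mulrCA mulfV ?mulr1.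
by apply: (scalerI two0); rewrite GE scalerA two_half.
Qed.

Lemma sq_eq_cases (x y : C) : x ^+ 2 = y ^+ 2 -> y = x \/ y = - x.
Proof.
move=> e; have : (y - x) * (y + x) = 0.
  have -> : (y - x) * (y + x) = y ^+ 2 - x ^+ 2 by ring.
  by rewrite e subrr.
by move/eqP; rewrite mulf_eq0 subr_eq0 addr_eq0 => /orP[/eqP|/eqP]; [left|right].
Qed.

Lemma addrr_neq0 (x : C) : x != 0 -> x + x != 0.
Proof. by move=> x0; rewrite -mulr2n mulrn_eq0 negb_or x0. Qed.

Ltac orbit_by W := apply: (in_proj_orbit_scale2G _ _ W);
  [ by apply: det_mxs; rewrite ?det_mxI ?det_mxJ ?det_mxW
  | by rewrite ?oppr_eq0 ?addrr_neq0 ].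

Lemma sq_eq_or_three0_orbit a b c d : ~ (a = 0 /\ b = 0 /\ c = 0 /\ d = 0) ->
  sq_eq_or_three0 a b c d -> in_proj_orbit (G a b c d) q0.
Proof.
move=> nz [[ab [bc cd]] | [] [? ? ?]]; subst; first last.
- have a0 : a != 0 by apply/eqP => a0; apply: nz; rewrite a0.
  orbit_by (twoG_a000 a).
- have b0 : b != 0 by apply/eqP => b0; apply: nz; rewrite b0.
  orbit_by (twoG_0b00 b).
- have c0 : c != 0 by apply/eqP => c0; apply: nz; rewrite c0.
  orbit_by (twoG_00c0 c).
- have d0 : d != 0 by apply/eqP => d0; apply: nz; rewrite d0.
  orbit_by (twoG_000d d).
have ac := etrans ab bc; have ad := etrans ac cd.
have a0 : a != 0.
  apply/eqP => a0; apply: nz; move: ab ac ad; rewrite a0 expr0n /=.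
  move=> /esym/eqP + /esym/eqP + /esym/eqP; rewrite !sqrf_eq0 => /eqP-> /eqP-> /eqP->.
  by do !split.
case: (sq_eq_cases ab) => ->; case: (sq_eq_cases ac) => ->; case: (sq_eq_cases ad) => ->.
- orbit_by (twoG_aaaa a).
- orbit_by (twoG_aaan a).
- orbit_by (twoG_aana a).
- orbit_by (twoG_aann a).
- orbit_by (twoG_anaa a).
- orbit_by (twoG_anan a).
- orbit_by (twoG_anna a).
- orbit_by (twoG_annn a).
Qed.

Lemma G_neq0 a b c d : ~ (a = 0 /\ b = 0 /\ c = 0 /\ d = 0) -> G a b c d != 0.
Proof.
move=> nz; apply/eqP => G0; apply: nz.
have coef0 x : coefG a b c d x = 0 by rewrite -mcoeffG G0 mcoeff0.
move: (coef0 (bool4 true true true true)) (coef0 (bool4 true true false false))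
      (coef0 (bool4 true false true false)) (coef0 (bool4 true false false true)).
rewrite /coefG !bool4E /= => e1 e2 e3 e4.
have := @halves_eq0 a b c d; rewrite e1 e2 e3 e4 !mul0r.
by case/(_ erefl erefl erefl erefl) => -> -> -> ->.
Qed.

Lemma reducible_G_cond a b c d : ~ (a = 0 /\ b = 0 /\ c = 0 /\ d = 0) ->
  reducible (G a b c d) -> sq_eq_or_three0 a b c d.
Proof. by move=> nz /coefG_exchange [E [EP nEP]]; apply: coefG_exchange_cond. Qed.

Lemma orbit_reducible f : f != 0 -> in_proj_orbit f q0 -> reducible f.
Proof. by move=> f0 [M [s [lam [_ _ fE]]]]; rewrite fE in f0 *; apply: reducible_act_q0. Qed.

Theorem mainTheorem8 (a b c d : C) :
  ~ (a = 0 /\ b = 0 /\ c = 0 /\ d = 0) ->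
  (reducible (G a b c d) <->
     ((a ^+ 2 = b ^+ 2 /\ b ^+ 2 = c ^+ 2 /\ c ^+ 2 = d ^+ 2) \/
      [\/ [/\ a = 0, b = 0 & c = 0], [/\ a = 0, b = 0 & d = 0],
          [/\ a = 0, c = 0 & d = 0] | [/\ b = 0, c = 0 & d = 0]]))
  /\
  (((a ^+ 2 = b ^+ 2 /\ b ^+ 2 = c ^+ 2 /\ c ^+ 2 = d ^+ 2) \/
      [\/ [/\ a = 0, b = 0 & c = 0], [/\ a = 0, b = 0 & d = 0],
          [/\ a = 0, c = 0 & d = 0] | [/\ b = 0, c = 0 & d = 0]])
   <-> in_proj_orbit (G a b c d) q0).
Proof.
move=> nz; have orbit_red := orbit_reducible (G_neq0 nz).
have cond_orbit := sq_eq_or_three0_orbit nz.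
have red_cond := reducible_G_cond nz.
split; split.
- exact: red_cond.
- by move/cond_orbit/orbit_red.
- exact: cond_orbit.
- by move/orbit_red/red_cond.
Qed.
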